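(* Under the setup below, assume Conditions 1 and 2 and the deviation bound (D) hold, that $p_\lambda$ is continuously differentiable on $(0,\infty)$, and that $\lambda\ge 56(1-c_1)^{-1}\kappa^{-2}\lambda_0 s^{1/2}$. Let $\widehat\beta$ be a global minimizer of $L$, and let $\widetilde\beta$ be the refitted least-squares estimator using only the covariates in $\operatorname{supp}(\widehat\beta)$ (i.e. $\widetilde\beta$ is zero outside $\operatorname{supp}(\widehat\beta)$ and equals the ordinary least-squares fit of $y$ on $\{x_j:j\in\operatorname{supp}(\widehat\beta)\}$ on that support). Then with probability $1-O(p^{-c_0})$, $\widetilde\beta$ equals the oracle estimator, namely the vector whose first $s$ entries are $(X_1^TX_1)^{-1}X_1^Ty$ and whose remaining entries are $0$. Consequently $\widetilde\beta$ inherits the asymptotic distribution of the oracle estimator whenever the latter is asymptotically normal.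
   Context: Setup: linear model $y=X\beta_0+\varepsilon$ with $y\in\mathbb{R}^n$, deterministic design $X=(x_1,\dots,x_p)\in\mathbb{R}^{n\times p}$ with $\|x_j\|_2=n^{1/2}$ for all $j$, unknown $\beta_0\in\mathbb{R}^p$, random noise $\varepsilon\in\mathbb{R}^n$. Without loss of generality the support of $\beta_0$ is $\{1,\dots,s\}$: $\beta_0=(\widetilde\beta_{0,1}^T,0^T)^T$ with all $s$ entries of $\widetilde\beta_{0,1}$ nonzero. $X_1$ is the $n\times s$ submatrix of the first $s$ columns of $X$. For $a\in\mathbb{R}^p$, $\widetilde a_1\in\mathbb{R}^s$ is its first $s$ components and $\widetilde a_2\in\mathbb{R}^{p-s}$ its remaining components. The penalty $p_\lambda:[0,\infty)\to[0,\infty)$, with $p_\lambda(0)=0$, is indexed by $\lambda\ge0$, and $p_\lambda(\infty)=\lim_{t\to\infty}p_\lambda(t)$. The objective is $L(\beta)=(2n)^{-1}\|y-X\beta\|_2^2+\lambda_0\|\beta\|_1+\sum_{j=1}^p p_\lambda(|\beta_j|)$ with $\lambda_0=c\{(\log p)/n\}^{1/2}$ for a fixed constant $c>0$. Asymptotics are as $n\to\infty$ with $p,s,\lambda$ allowed to depend on $n$; in all bounds $p$ stands for $\max(n,p)$. Deviation bound (D): $\mathrm{pr}(\|n^{-1}X^T\varepsilon\|_\infty>\lambda_0/2)=O(p^{-c_0})$ for some positive constant $c_0$. Condition 1: for some constant $\kappa_0>0$, $\min\{n^{-1/2}\|X\delta\|_2:\|\delta\|_2=1,\ \|\delta\|_0<2s\}\ge\kappa_0$,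 and $\kappa=\kappa(s,7)=\min\{n^{-1/2}\|X\delta\|_2/(\|\widetilde\delta_1\|_2\vee\|\widetilde\delta_2'\|_2):\ \delta\ne0,\ \|\widetilde\delta_2\|_1\le 7\|\widetilde\delta_1\|_1\}>0$, where $\widetilde\delta_2'$ is the subvector of $\widetilde\delta_2$ of its $s$ entries of largest absolute value. Condition 2: $p_\lambda$ is increasing and concave on $[0,\infty)$, $p_\lambda(t)\ge \tfrac12\{\lambda^2-(\lambda-t)_+^2\}$ on $[0,\lambda]$, $p_\lambda'\{(1-c_1)\lambda\}\le c_1\lambda$ for some $c_1\in[0,1)$, $-p_\lambda''$ is decreasing on $[0,(1-c_1)\lambda]$; moreover $p_\lambda'\{(1-c_1)\lambda\}\le\lambda_0/4$ and $\min_{1\le j\le s}|\beta_{0,j}|>\max\{(1-c_1)\lambda,\ 2\kappa_0^{-1}p_\lambda^{1/2}(\infty)\}$. *)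

From Stdlib Require Import Reals Lra Lia List.
Open Scope R_scope.

Fixpoint sumR (f : nat -> R) (m : nat) : R :=
  match m with O => 0 | S m' => sumR f m' + f m' end.

Fixpoint nnz (f : nat -> R) (m : nat) : nat :=
  match m with
  | O => O
  | S m' => (nnz f m' + (if Req_EM_T (f m') 0 then 0 else 1))%nat
  end.

Definition sqnorm (f : nat -> R) (m : nat) : R := sumR (fun k => f k ^ 2) m.

Definition Xmul (X : nat -> nat -> R) (p : nat) (b : nat -> R) : nat -> R :=
  fun i => sumR (fun j => X i j * b j) p.

Definition l1range (f : nat -> R) (a b : nat) : R :=
  sumR (fun k => Rabs (f (a + k)%nat)) (b - a).

Definition sqnorm_list (f : nat -> R) (T : list nat) : R :=
  fold_right (fun j acc => f j ^ 2 + acc) 0 T.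

Definition pbar (n p : nat) : nat := Nat.max n p.

Definition lambda0 (c : R) (n p : nat) : R :=
  c * sqrt (ln (INR (pbar n p)) / INR n).

Definition Lobj (n p : nat) (X : nat -> nat -> R) (y : nat -> R) (lam0 : R)
  (pen : R -> R) (b : nat -> R) : R :=
  / (2 * INR n) * sqnorm (fun i => y i - Xmul X p b i) n
  + lam0 * sumR (fun j => Rabs (b j)) p
  + sumR (fun j => pen (Rabs (b j))) p.

Definition is_global_min (n p : nat) (X : nat -> nat -> R) (y : nat -> R)
  (lam0 : R) (pen : R -> R) (bhat : nat -> R) : Prop :=
  forall b : nat -> R, Lobj n p X y lam0 pen bhat <= Lobj n p X y lam0 pen b.

Definition supported_in (p : nat) (bhat b : nat -> R) : Prop :=
  forall j, (j < p)%nat -> bhat j = 0 -> b j = 0.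

Definition is_refit (n p : nat) (X : nat -> nat -> R) (y : nat -> R)
  (bhat bt : nat -> R) : Prop :=
  supported_in p bhat bt /\
  forall b, supported_in p bhat b ->
    sqnorm (fun i => y i - Xmul X p bt i) n <= sqnorm (fun i => y i - Xmul X p b i) n.

(* bt equals the oracle estimator: zero on s <= j < p and its first s
   entries b1 satisfy (X_1^T X_1) b1 = X_1^T y, i.e. b1 = (X_1^T X_1)^{-1} X_1^T y
   (X_1^T X_1 is invertible under Condition 1). *)
Definition is_oracle (n p s : nat) (X : nat -> nat -> R) (y : nat -> R)
  (bt : nat -> R) : Prop :=
  (forall j, (s <= j < p)%nat -> bt j = 0) /\
  (forall k, (k < s)%nat ->
     sumR (fun j => sumR (fun i => X i k * X i j) n * bt j) s
     = sumR (fun i => X i k * y i) n).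

Definition cone7 (p s : nat) (d : nat -> R) : Prop :=
  (exists j, (j < p)%nat /\ d j <> 0) /\ l1range d s p <= 7 * l1range d 0 s.

Definition admissible_T (p s : nat) (T : list nat) : Prop :=
  NoDup T /\ Forall (fun j => (s <= j < p)%nat) T /\ (length T <= s)%nat.

(* k is a lower bound of  n^{-1/2}||X d||_2 / (||d_1||_2 v ||d_2'||_2)  over the cone;
   ||d_2'||_2 = max over admissible T of (sum_{j in T} d_j^2)^{1/2} *)
Definition kappa_lb (n p s : nat) (X : nat -> nat -> R) (k : R) : Prop :=
  forall d, cone7 p s d -> forall T, admissible_T p s T ->
    / sqrt (INR n) * sqrt (sqnorm (Xmul X p d) n)
      >= k * Rmax (sqrt (sqnorm d s)) (sqrt (sqnorm_list d T)).

Definition is_kappa (n p s : nat) (X : nat -> nat -> R) (kappa : R) : Prop :=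
  kappa_lb n p s X kappa /\ (forall k, kappa_lb n p s X k -> k <= kappa).

Definition Condition1 (n p s : nat) (X : nat -> nat -> R) (kappa0 kappa : R) : Prop :=
  (forall j, (j < p)%nat -> sqnorm (fun i => X i j) n = INR n) /\
  (forall d, (nnz d p < 2 * s)%nat -> sqnorm d p = 1 ->
     / sqrt (INR n) * sqrt (sqnorm (Xmul X p d) n) >= kappa0) /\
  is_kappa n p s X kappa /\ kappa > 0.

(* pen = p_lambda, pen' its derivative on (0,oo), pen'' the derivative of pen'
   on (0,(1-c1)lambda), pinf = p_lambda(oo) *)
Definition Condition2 (p s : nat) (pen pen' pen'' : R -> R) (lam lam0 c1 kappa0 pinf : R)
  (beta0 : nat -> R) : Prop :=
  pen 0 = 0 /\ (forall t, 0 <= t -> 0 <= pen t) /\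
  (forall x y, 0 <= x -> x <= y -> pen x <= pen y) /\
  (forall x y t, 0 <= x -> 0 <= y -> 0 <= t <= 1 ->
     t * pen x + (1 - t) * pen y <= pen (t * x + (1 - t) * y)) /\
  (forall t, 0 <= t <= lam -> pen t >= / 2 * (lam ^ 2 - (Rmax (lam - t) 0) ^ 2)) /\
  pen' ((1 - c1) * lam) <= c1 * lam /\
  (forall x, 0 < x < (1 - c1) * lam -> derivable_pt_lim pen' x (pen'' x)) /\
  (forall x y, 0 < x -> x <= y -> y < (1 - c1) * lam -> - pen'' y <= - pen'' x) /\
  pen' ((1 - c1) * lam) <= lam0 / 4 /\
  (forall eps, eps > 0 -> exists T, forall t, t >= T -> Rabs (pen t - pinf) < eps) /\
  (forall j, (j < s)%nat -> Rabs (beta0 j) > Rmax ((1 - c1) * lam) (2 / kappa0 * sqrt pinf)).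

Definition is_prob {Omega : Type} (P : (Omega -> Prop) -> R) : Prop :=
  (forall A, 0 <= P A) /\ P (fun _ => True) = 1 /\
  (forall A B, (forall w, A w <-> B w) -> P A = P B) /\
  (forall A B, (forall w, A w -> B w -> False) -> P (fun w => A w \/ B w) = P A + P B).

From Stdlib Require Import Reals Lra Lia List FunctionalExtensionality Classical.
Open Scope R_scope.

(* On the event of (D) every column correlates with the noise by at most [lam0 / 2].  A nonzero
   coordinate of a global minimiser below the threshold [t0 = (1 - c1) lam] can be set to zero
   without increasing the objective: stationarity gives [sign * a_j = lam0 + pen' u], and the
   resulting decrease [pen u - u pen' u - u^2 / 2] is nonnegative by the concavity conditions on
   the penalty.  For a minimiser whose nonzero coordinates all exceed [t0], the basic inequality,
   the restricted and sparse eigenvalue conditions and the beta-min condition force the support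
   [{0, ..., s-1}] and a prediction error of order [lam0 sqrt s / kappa].  That small prediction
   error in turn excludes small nonzero coordinates of any global minimiser, so its support is
   exactly the true one and the refitted least-squares estimator solves the oracle normal
   equations. *)

Lemma sumR_ext f g m : (forall k, (k < m)%nat -> f k = g k) -> sumR f m = sumR g m.
Proof.
  induction m as [|m IH]; intros H; simpl; [reflexivity|].
  rewrite IH by (intros; apply H; lia). rewrite H by lia; reflexivity.
Qed.

Lemma sumR_plus f g m : sumR (fun k => f k + g k) m = sumR f m + sumR g m.
Proof. induction m; simpl; [lra|rewrite IHm; lra]. Qed.

Lemma sumR_minus f g m : sumR (fun k => f k - g k) m = sumR f m - sumR g m.
Proof. induction m; simpl; [lra|rewrite IHm; lra]. Qed.

Lemma sumR_scal c f m : sumR (fun k => c * f k) m = c * sumR f m.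
Proof. induction m; simpl; [lra|rewrite IHm; lra]. Qed.

Lemma sumR_const c m : sumR (fun _ => c) m = INR m * c.
Proof. induction m; simpl sumR; [simpl; ring|rewrite IHm, S_INR; ring]. Qed.

Lemma sumR_eq0 f m : (forall k, (k < m)%nat -> f k = 0) -> sumR f m = 0.
Proof. intros H. rewrite (sumR_ext _ (fun _ => 0)) by exact H. rewrite sumR_const; ring. Qed.

Lemma sumR_le f g m : (forall k, (k < m)%nat -> f k <= g k) -> sumR f m <= sumR g m.
Proof.
  induction m as [|m IH]; intros H; simpl; [lra|].
  assert (f m <= g m) by (apply H; lia).
  assert (sumR f m <= sumR g m) by (apply IH; intros; apply H; lia). lra.
Qed.

Lemma sumR_nonneg f m : (forall k, (k < m)%nat -> 0 <= f k) -> 0 <= sumR f m.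
Proof. intros H. rewrite <- (sumR_eq0 (fun _ => 0) m) by auto. apply sumR_le; auto. Qed.

Lemma sumR_term_le f m j :
  (forall k, (k < m)%nat -> 0 <= f k) -> (j < m)%nat -> f j <= sumR f m.
Proof.
  induction m as [|m IH]; intros H Hj; [lia|simpl].
  assert (0 <= f m) by (apply H; lia).
  destruct (Nat.eq_dec j m) as [->|Hjm].
  - assert (0 <= sumR f m) by (apply sumR_nonneg; intros; apply H; lia). lra.
  - assert (f j <= sumR f m) by (apply IH; [intros; apply H|]; lia). lra.
Qed.

Lemma sumR_split f a b : (a <= b)%nat ->
  sumR f b = sumR f a + sumR (fun k => f (a + k)%nat) (b - a).
Proof.
  intros Hab. replace b with (a + (b - a))%nat at 1 by lia.
  induction (b - a)%nat as [|m IH]; simpl.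
  - rewrite Nat.add_0_r; lra.
  - rewrite Nat.add_succ_r; simpl. rewrite IH; lra.
Qed.

Lemma sumR_comm (f : nat -> nat -> R) n p :
  sumR (fun i => sumR (fun j => f i j) p) n = sumR (fun j => sumR (fun i => f i j) n) p.
Proof.
  induction n as [|n IH]; simpl.
  - symmetry; apply sumR_eq0; auto.
  - rewrite IH, <- sumR_plus; reflexivity.
Qed.

(* The discriminant of the nonnegative quadratic [t => sum_k (a_k t - b_k)^2]. *)
Lemma sumR_Cauchy_Schwarz a b m :
  sumR (fun k => a k * b k) m ^ 2
  <= sumR (fun k => a k ^ 2) m * sumR (fun k => b k ^ 2) m.
Proof.
  set (A := sumR (fun k => a k ^ 2) m). set (B := sumR (fun k => b k ^ 2) m).
  set (C := sumR (fun k => a k * b k) m).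
  assert (HA : 0 <= A) by (apply sumR_nonneg; intros; apply pow2_ge_0).
  assert (Hq : forall t, 0 <= t ^ 2 * A - 2 * t * C + B).
  { intros t.
    replace (t ^ 2 * A - 2 * t * C + B) with (sumR (fun k => (a k * t - b k) ^ 2) m).
    - apply sumR_nonneg; intros; apply pow2_ge_0.
    - rewrite (sumR_ext _ (fun k => (t ^ 2 * a k ^ 2 - (2 * t) * (a k * b k)) + b k ^ 2))
        by (intros; ring).
      rewrite sumR_plus, sumR_minus, !sumR_scal; reflexivity. }
  destruct (Req_dec A 0) as [H0|H0].
  - assert (C = 0) as ->.
    { destruct (Req_dec C 0) as [|HC]; auto.
      specialize (Hq ((B + 1) / (2 * C))). rewrite H0 in Hq.
      replace (((B + 1) / (2 * C)) ^ 2 * 0 - 2 * ((B + 1) / (2 * C)) * C + B) with (-1)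
        in Hq by (field; auto). lra. }
    rewrite H0; lra.
  - specialize (Hq (C / A)).
    replace ((C / A) ^ 2 * A - 2 * (C / A) * C + B) with (B - C ^ 2 / A) in Hq by (field; auto).
    apply Rmult_le_reg_r with (/ A); [apply Rinv_0_lt_compat; lra|].
    replace (A * B * / A) with B by (field; auto). unfold Rdiv in Hq. lra.
Qed.

Definition upd (b : nat -> R) (j : nat) (t : R) : nat -> R :=
  fun k => if Nat.eq_dec k j then t else b k.

Lemma sumR_upd (G : nat -> R -> R) b j t m : (j < m)%nat ->
  sumR (fun k => G k (upd b j t k)) m = sumR (fun k => G k (b k)) m - G j (b j) + G j t.
Proof.
  induction m as [|m IH]; intros Hj; [lia|simpl]. unfold upd at 2.
  destruct (Nat.eq_dec m j) as [<-|Hmj].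
  - rewrite (sumR_ext _ (fun k => G k (b k))); [lra|].
    intros k Hk. unfold upd. destruct (Nat.eq_dec k m); [lia|reflexivity].
  - rewrite IH by lia. lra.
Qed.

Lemma Xmul_upd X p b j t i : (j < p)%nat ->
  Xmul X p (upd b j t) i = Xmul X p b i + X i j * (t - b j).
Proof. intros Hj. unfold Xmul. rewrite (sumR_upd (fun k v => X i k * v)) by auto. ring. Qed.

Lemma Xmul_minus X p b c i : Xmul X p (fun j => b j - c j) i = Xmul X p b i - Xmul X p c i.
Proof. unfold Xmul. rewrite <- sumR_minus. apply sumR_ext; intros; ring. Qed.

Lemma Xmul_zero_tail X p s b i : (s <= p)%nat -> (forall j, (s <= j < p)%nat -> b j = 0) ->
  Xmul X p b i = sumR (fun j => X i j * b j) s.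
Proof.
  intros Hsp Hb. unfold Xmul. rewrite (sumR_split _ s p Hsp).
  rewrite (sumR_eq0 (fun k => X i (s + k)%nat * b (s + k)%nat)); [ring|].
  intros k Hk. rewrite Hb by lia. ring.
Qed.

Lemma sumR_Xmul_inner X n p v d :
  sumR (fun i => v i * Xmul X p d i) n = sumR (fun j => d j * sumR (fun i => X i j * v i) n) p.
Proof.
  unfold Xmul. rewrite (sumR_ext _ (fun i => sumR (fun j => v i * X i j * d j) p)).
  - rewrite sumR_comm. apply sumR_ext. intros j _. rewrite <- sumR_scal.
    apply sumR_ext; intros; ring.
  - intros i _. rewrite <- sumR_scal. apply sumR_ext; intros; ring.
Qed.

Lemma sqnorm_nonneg u n : 0 <= sqnorm u n.
Proof. apply sumR_nonneg; intros; apply pow2_ge_0. Qed.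

Lemma sqnorm_sub_scal u v c n : sqnorm (fun i => u i - c * v i) n
  = sqnorm u n - 2 * c * sumR (fun i => u i * v i) n + c ^ 2 * sqnorm v n.
Proof.
  unfold sqnorm. rewrite <- !sumR_scal, <- sumR_minus, <- sumR_plus.
  apply sumR_ext; intros; ring.
Qed.

Lemma Rle_sqrt_of_sq a b : 0 <= a -> a ^ 2 <= b -> a <= sqrt b.
Proof. intros Ha H. rewrite <- (sqrt_pow2 a Ha). apply sqrt_le_1_alt, H. Qed.

Lemma Rabs_le_sqrt_sqnorm d s j : (j < s)%nat -> Rabs (d j) <= sqrt (sqnorm d s).
Proof.
  intros Hj. apply Rle_sqrt_of_sq; [apply Rabs_pos|]. rewrite pow2_abs.
  apply (sumR_term_le (fun k => d k ^ 2)); auto. intros; apply pow2_ge_0.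
Qed.

Lemma l1_le_sqrt_card_l2 d s : sumR (fun j => Rabs (d j)) s <= sqrt (INR s) * sqrt (sqnorm d s).
Proof.
  rewrite <- sqrt_mult_alt by apply pos_INR.
  apply Rle_sqrt_of_sq; [apply sumR_nonneg; intros; apply Rabs_pos|].
  pose proof (sumR_Cauchy_Schwarz (fun j => Rabs (d j)) (fun _ => 1) s) as H.
  rewrite (sumR_ext (fun k => Rabs (d k) * 1) (fun k => Rabs (d k))) in H by (intros; ring).
  rewrite (sumR_ext (fun k => 1 ^ 2) (fun _ => 1)) in H by (intros; ring).
  rewrite (sumR_ext (fun k => Rabs (d k) ^ 2) (fun k => d k ^ 2)) in H by (intros; apply pow2_abs).
  rewrite sumR_const in H. unfold sqnorm. lra.
Qed.

Lemma sqrt_inv_INR_mult n Q : (1 <= n)%nat -> 0 <= Q ->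
  / sqrt (INR n) * sqrt Q = sqrt (/ INR n * Q).
Proof.
  intros Hn HQ. assert (0 < INR n) by (apply lt_0_INR; lia).
  rewrite sqrt_mult_alt by (left; apply Rinv_0_lt_compat; lra). rewrite sqrt_inv. reflexivity.
Qed.

Lemma column_correlation_le n (X : nat -> nat -> R) j v :
  (1 <= n)%nat -> sqnorm (fun i => X i j) n = INR n ->
  Rabs (/ INR n * sumR (fun i => X i j * v i) n) <= sqrt (/ INR n * sqnorm v n).
Proof.
  intros Hn Hcol. assert (Hnpos : 0 < INR n) by (apply lt_0_INR; lia).
  apply Rle_sqrt_of_sq; [apply Rabs_pos|]. rewrite pow2_abs.
  pose proof (sumR_Cauchy_Schwarz (fun i => X i j) v n) as H. cbv beta in H.
  change (sumR (fun k => X k j ^ 2) n) with (sqnorm (fun i => X i j) n) in H.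
  change (sumR (fun k => v k ^ 2) n) with (sqnorm v n) in H.
  rewrite Hcol in H. set (S := sumR (fun i => X i j * v i) n) in *.
  replace ((/ INR n * S) ^ 2) with (/ INR n * / INR n * S ^ 2) by ring.
  replace (/ INR n * sqnorm v n) with (/ INR n * / INR n * (INR n * sqnorm v n)) by (field; lra).
  apply Rmult_le_compat_l; [|exact H].
  assert (0 < / INR n) by (apply Rinv_0_lt_compat; lra). nra.
Qed.

Definition nz_ind (x : R) : R := if Req_EM_T x 0 then 0 else 1.

Lemma nz_ind_cases x : nz_ind x = 0 /\ x = 0 \/ nz_ind x = 1 /\ x <> 0.
Proof. unfold nz_ind. destruct (Req_EM_T x 0); auto. Qed.

Lemma nz_ind_bounds x : 0 <= nz_ind x <= 1.
Proof. destruct (nz_ind_cases x) as [[-> _]|[-> _]]; lra. Qed.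

Lemma nnz_sum_ind d m : INR (nnz d m) = sumR (fun j => nz_ind (d j)) m.
Proof.
  induction m as [|m IH]; simpl; [reflexivity|]. rewrite plus_INR, IH.
  unfold nz_ind. destruct (Req_EM_T (d m) 0); simpl; lra.
Qed.

Lemma nnz_div d c m : c <> 0 -> nnz (fun j => d j / c) m = nnz d m.
Proof.
  intros Hc. induction m as [|m IH]; simpl; [reflexivity|]. rewrite IH.
  destruct (Req_EM_T (d m / c) 0) as [E|E]; destruct (Req_EM_T (d m) 0) as [F|F]; auto.
  - exfalso. apply F. apply (Rmult_eq_reg_r (/ c)); [lra|now apply Rinv_neq_0_compat].
  - exfalso. apply E. rewrite F. unfold Rdiv; ring.
Qed.

Definition concave_nonneg (f : R -> R) : Prop :=
  forall x y t, 0 <= x -> 0 <= y -> 0 <= t <= 1 ->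
    t * f x + (1 - t) * f y <= f (t * x + (1 - t) * y).

Lemma concave_chord f a x eta : concave_nonneg f -> 0 <= a -> 0 <= x -> 0 <= eta <= 1 ->
  eta * (f x - f a) <= f (a + eta * (x - a)) - f a.
Proof.
  intros Hc Ha Hx He.
  replace (a + eta * (x - a)) with (eta * x + (1 - eta) * a) by ring.
  pose proof (Hc x a eta Hx Ha He). lra.
Qed.

(* By concavity [f x - f a <= q (x - a)] for every chord slope [q] from [a] towards [x]; as the
   chord shrinks, [q] tends to [d]. *)
Lemma concave_tangent f d a x : concave_nonneg f -> 0 <= a -> 0 <= x ->
  derivable_pt_lim f a d -> f x <= f a + d * (x - a).
Proof.
  intros Hc Ha Hx Hd.
  destruct (Rle_dec (f x) (f a + d * (x - a))) as [|Hn]; [assumption|exfalso].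
  set (D := f x - f a - d * (x - a)).
  assert (HD : 0 < D) by (unfold D; lra).
  assert (Hax : 0 < Rabs (x - a)).
  { apply Rabs_pos_lt. intros E. unfold D in HD. replace x with a in HD by lra. lra. }
  destruct (Hd (D / (2 * Rabs (x - a)))) as [[del Hdel0] Hdel];
    [apply Rdiv_lt_0_compat; lra|simpl in Hdel].
  set (eta := Rmin 1 (del / (2 * Rabs (x - a)))).
  assert (He0 : 0 < eta) by (apply Rmin_glb_lt; [lra|apply Rdiv_lt_0_compat; lra]).
  assert (He1 : eta <= 1) by apply Rmin_l.
  assert (He2 : eta <= del / (2 * Rabs (x - a))) by apply Rmin_r.
  set (h := eta * (x - a)).
  assert (Hxa : x - a <> 0) by (intro E; rewrite E, Rabs_R0 in Hax; lra).
  assert (Hh0 : h <> 0) by (apply Rmult_integral_contrapositive; split; [lra|exact Hxa]).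
  assert (Hhd : Rabs h < del).
  { unfold h. rewrite Rabs_mult, (Rabs_right eta) by lra.
    apply Rle_lt_trans with (del / (2 * Rabs (x - a)) * Rabs (x - a)).
    - apply Rmult_le_compat_r; lra.
    - replace (del / (2 * Rabs (x - a)) * Rabs (x - a)) with (del / 2) by (field; lra). lra. }
  specialize (Hdel h Hh0 Hhd).
  set (q := (f (a + h) - f a) / h) in Hdel.
  assert (Hchord : f x - f a <= q * (x - a)).
  { pose proof (concave_chord f a x eta Hc Ha Hx ltac:(lra)) as Hch. fold h in Hch.
    replace (f (a + h) - f a) with (eta * (q * (x - a))) in Hch
      by (unfold q, h; field; repeat split; try exact Hxa; lra).
    apply Rmult_le_reg_l with eta; lra. }
  assert (Hq : (q - d) * (x - a) < D / 2).
  { apply Rle_lt_trans with (Rabs (q - d) * Rabs (x - a)); [rewrite <- Rabs_mult; apply Rle_abs|].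
    replace (D / 2) with (D / (2 * Rabs (x - a)) * Rabs (x - a)) by (field; lra).
    apply Rmult_lt_compat_r; assumption. }
  unfold D in *. lra.
Qed.

Lemma concave_deriv_antitone f f' a b : concave_nonneg f -> 0 <= a -> a <= b ->
  derivable_pt_lim f a (f' a) -> derivable_pt_lim f b (f' b) -> f' b <= f' a.
Proof.
  intros Hc Ha Hab Hda Hdb.
  pose proof (concave_tangent f (f' a) a b Hc Ha ltac:(lra) Hda).
  pose proof (concave_tangent f (f' b) b a Hc ltac:(lra) Ha Hdb).
  destruct (Req_dec a b) as [->|]; [lra|nra].
Qed.

Lemma continuity_pt_le_left f x a c : continuity_pt f x -> a < x ->
  (forall w, a < w < x -> f w <= c) -> f x <= c.
Proof.
  intros Hf Hax Hle. destruct (Rle_dec (f x) c) as [|Hgt]; [assumption|exfalso].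
  destruct (Hf (f x - c)) as [del [Hdel Hw]]; [lra|].
  set (w := x - Rmin (del / 2) ((x - a) / 2)).
  assert (Hm1 : Rmin (del / 2) ((x - a) / 2) <= del / 2) by apply Rmin_l.
  assert (Hm2 : Rmin (del / 2) ((x - a) / 2) <= (x - a) / 2) by apply Rmin_r.
  assert (Hm0 : 0 < Rmin (del / 2) ((x - a) / 2)) by (apply Rmin_glb_lt; lra).
  specialize (Hle w ltac:(unfold w; lra)).
  assert (Hwx : R_dist w x < del) by (unfold R_dist, w; rewrite Rabs_left; lra).
  assert (Hxw : x <> w) by (unfold w; intro; lra).
  specialize (Hw w (conj (conj I Hxw) Hwx)). simpl in Hw.
  unfold R_dist in Hw. pose proof (Rle_abs (f x - f w)). rewrite Rabs_minus_sym in Hw. lra.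
Qed.

Lemma kappa_lb_cone n p s X kappa d : (1 <= n)%nat -> (s <= p)%nat ->
  kappa_lb n p s X kappa -> l1range d s p <= 7 * l1range d 0 s ->
  kappa * sqrt (sqnorm d s) <= sqrt (/ INR n * sqnorm (Xmul X p d) n).
Proof.
  intros Hn Hsp Hk Hcone.
  destruct (classic (exists j, (j < p)%nat /\ d j <> 0)) as [Hnz|Hz].
  - assert (Hadm : admissible_T p s nil) by (repeat split; [constructor|constructor|simpl; lia]).
    specialize (Hk d (conj Hnz Hcone) nil Hadm). simpl sqnorm_list in Hk.
    rewrite sqrt_0, sqrt_inv_INR_mult in Hk by (auto; apply sqnorm_nonneg).
    rewrite Rmax_left in Hk by apply sqrt_pos. lra.
  - assert (Hd0 : forall j, (j < p)%nat -> d j = 0).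
    { intros j Hj. destruct (Req_dec (d j) 0); auto. exfalso; eauto. }
    replace (sqnorm d s) with 0
      by (symmetry; apply sumR_eq0; intros j Hj; rewrite Hd0 by lia; ring).
    rewrite sqrt_0, Rmult_0_r. apply sqrt_pos.
Qed.

Lemma restricted_eigenvalue_bounds n p s X kappa d alpha lam0 :
  (1 <= n)%nat -> 0 < lam0 -> 0 < alpha -> (s <= p)%nat -> 0 < kappa ->
  kappa_lb n p s X kappa ->
  alpha * (/ INR n * sqnorm (Xmul X p d) n)
    + lam0 / 2 * sumR (fun k => Rabs (d (s + k)%nat)) (p - s)
    <= 7 / 4 * lam0 * sumR (fun j => Rabs (d j)) s ->
  sqrt (/ INR n * sqnorm (Xmul X p d) n) <= 7 / 4 * lam0 * sqrt (INR s) / (alpha * kappa) /\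
  sqrt (sqnorm d s) <= 7 / 4 * lam0 * sqrt (INR s) / (alpha * kappa ^ 2).
Proof.
  intros Hn Hl0 Ha Hsp Hk0 Hk H.
  assert (Hnpos : 0 < INR n) by (apply lt_0_INR; lia).
  set (A1 := sumR (fun j => Rabs (d j)) s) in *.
  set (A2 := sumR (fun k => Rabs (d (s + k)%nat)) (p - s)) in *.
  set (SX := / INR n * sqnorm (Xmul X p d) n) in *.
  assert (HSX : 0 <= SX)
    by (apply Rmult_le_pos; [left; apply Rinv_0_lt_compat; lra|apply sqnorm_nonneg]).
  assert (HA2 : 0 <= A2) by (apply sumR_nonneg; intros; apply Rabs_pos).
  assert (Hcone : l1range d s p <= 7 * l1range d 0 s).
  { unfold l1range. rewrite Nat.sub_0_r. fold A2. change (A2 <= 7 * A1). nra. }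
  pose proof (kappa_lb_cone n p s X kappa d Hn Hsp Hk Hcone) as HkN. fold SX in HkN.
  pose proof (l1_le_sqrt_card_l2 d s) as HCS. fold A1 in HCS.
  set (R1 := sqrt SX) in *. set (N1 := sqrt (sqnorm d s)) in *.
  set (K := 7 / 4 * lam0 * sqrt (INR s)).
  assert (HR1 : 0 <= R1) by apply sqrt_pos.
  assert (HN1 : 0 <= N1) by apply sqrt_pos.
  assert (Hs : 0 <= sqrt (INR s)) by apply sqrt_pos.
  assert (HK : 0 <= K) by (unfold K; apply Rmult_le_pos; lra).
  assert (HRR : R1 * R1 = SX) by (apply sqrt_sqrt; auto).
  assert (Hquad : alpha * kappa * (R1 * R1) <= K * R1).
  { assert (alpha * SX <= K * N1).
    { assert (0 <= lam0 / 2 * A2) by (apply Rmult_le_pos; lra).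
      apply Rle_trans with (7 / 4 * lam0 * A1); [lra|].
      unfold K. rewrite (Rmult_assoc (7 / 4 * lam0)). apply Rmult_le_compat_l; lra. }
    rewrite HRR. nra. }
  assert (HR : R1 <= K / (alpha * kappa)).
  { apply Rmult_le_reg_l with (alpha * kappa); [nra|].
    replace (alpha * kappa * (K / (alpha * kappa))) with K by (field; lra).
    destruct (Req_dec R1 0) as [->|HR0]; nra. }
  split; [exact HR|].
  apply Rmult_le_reg_l with kappa; [exact Hk0|].
  replace (kappa * (K / (alpha * kappa ^ 2))) with (K / (alpha * kappa)) by (field; lra). lra.
Qed.

Lemma sparse_eigenvalue_bound n p s X kappa0 d : (1 <= n)%nat ->
  (forall d, (nnz d p < 2 * s)%nat -> sqnorm d p = 1 ->
     / sqrt (INR n) * sqrt (sqnorm (Xmul X p d) n) >= kappa0) ->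
  (nnz d p < 2 * s)%nat -> 0 <= kappa0 ->
  / INR n * sqnorm (Xmul X p d) n >= kappa0 ^ 2 * sqnorm d p.
Proof.
  intros Hn Hc Hnz Hk0. assert (Hnpos : 0 < INR n) by (apply lt_0_INR; lia).
  pose proof (sqnorm_nonneg (Xmul X p d) n) as HQ.
  destruct (Req_dec (sqnorm d p) 0) as [E|E].
  { rewrite E, Rmult_0_r. apply Rle_ge, Rmult_le_pos; [left; apply Rinv_0_lt_compat|]; lra. }
  set (c := sqrt (sqnorm d p)).
  assert (Hc0 : 0 < c) by (apply sqrt_lt_R0; pose proof (sqnorm_nonneg d p); lra).
  assert (Hcc : c * c = sqnorm d p) by (apply sqrt_sqrt, sqnorm_nonneg).
  specialize (Hc (fun j => d j / c)). rewrite nnz_div in Hc by lra. specialize (Hc Hnz).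
  assert (E1 : sqnorm (fun j => d j / c) p = 1).
  { unfold sqnorm. rewrite (sumR_ext _ (fun k => / (c * c) * d k ^ 2)) by (intros; field; lra).
    rewrite sumR_scal. fold (sqnorm d p). rewrite Hcc. field. lra. }
  assert (E2 : sqnorm (Xmul X p (fun j => d j / c)) n = / (c * c) * sqnorm (Xmul X p d) n).
  { unfold sqnorm. rewrite <- sumR_scal. apply sumR_ext; intros i _. unfold Xmul.
    rewrite (sumR_ext (fun j => X i j * (d j / c)) (fun j => / c * (X i j * d j)))
      by (intros; field; lra).
    rewrite sumR_scal. field. lra. }
  specialize (Hc E1). rewrite E2, sqrt_inv_INR_mult in Hc
    by (first [assumption|apply Rmult_le_pos; [left; apply Rinv_0_lt_compat; nra|lra]]).
  set (Q := sqnorm (Xmul X p d) n) in *.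
  assert (H1 : kappa0 * kappa0 <= / INR n * (/ (c * c) * Q)).
  { rewrite <- sqrt_sqrt.
    - apply Rmult_le_compat; lra.
    - repeat apply Rmult_le_pos; try (left; apply Rinv_0_lt_compat); nra. }
  rewrite <- Hcc. apply Rle_ge.
  apply Rmult_le_reg_r with (/ (c * c)); [apply Rinv_0_lt_compat; nra|].
  replace (kappa0 ^ 2 * (c * c) * / (c * c)) with (kappa0 * kappa0) by (field; lra). lra.
Qed.

(* [kappa(0,7)] would be unbounded, since the cone condition then forces [d = 0]. *)
Lemma is_kappa_sparsity_pos n p s X kappa : is_kappa n p s X kappa -> (1 <= s)%nat.
Proof.
  intros [_ Hmax]. destruct s; [exfalso|lia].
  enough (kappa_lb n p 0 X (kappa + 1)) by (specialize (Hmax _ H); lra).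
  intros d [[j [Hj Hd]] Hc] T _. exfalso.
  unfold l1range in Hc. simpl in Hc. rewrite Nat.sub_0_r in Hc.
  assert (Rabs (d j) <= sumR (fun k => Rabs (d k)) p)
    by (apply (sumR_term_le (fun k => Rabs (d k))); auto; intros; apply Rabs_pos).
  assert (0 < Rabs (d j)) by (apply Rabs_pos_lt; auto). lra.
Qed.

Lemma kappa_lb_le_1 n p s X kappa : (1 <= n)%nat -> (1 <= s)%nat -> (s <= p)%nat ->
  sqnorm (fun i => X i 0%nat) n = INR n -> kappa_lb n p s X kappa -> kappa <= 1.
Proof.
  intros Hn Hs Hsp Hcol Hk. assert (Hnpos : 0 < INR n) by (apply lt_0_INR; lia).
  set (e := upd (fun _ => 0) 0 1).
  assert (Hcone : cone7 p s e).
  { split; [exists 0%nat; split; [lia|unfold e, upd; simpl; lra]|].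
    unfold l1range. rewrite (sumR_eq0 (fun k => Rabs (e (s + k)%nat))).
    - apply Rmult_le_pos; [lra|apply sumR_nonneg; intros; apply Rabs_pos].
    - intros k _. unfold e, upd. destruct (Nat.eq_dec (s + k) 0); [lia|apply Rabs_R0]. }
  assert (Hadm : admissible_T p s nil) by (repeat split; [constructor|constructor|simpl; lia]).
  specialize (Hk e Hcone nil Hadm). simpl sqnorm_list in Hk.
  assert (E1 : sqnorm (Xmul X p e) n = INR n).
  { rewrite <- Hcol. apply sumR_ext. intros i _. unfold e. rewrite Xmul_upd by lia.
    unfold Xmul. rewrite sumR_eq0 by (intros; ring). f_equal; ring. }
  assert (E2 : sqnorm e s = 1).
  { unfold sqnorm, e. rewrite (sumR_upd (fun _ v => v ^ 2)) by lia.
    rewrite sumR_eq0 by (intros; ring). ring. }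
  rewrite E1, E2, sqrt_0, sqrt_1, Rmax_left in Hk by lra.
  assert (/ sqrt (INR n) * sqrt (INR n) = 1)
    by (field; apply Rgt_not_eq, sqrt_lt_R0; lra). lra.
Qed.

(* Change of [Lobj], up to a constant, when a coordinate equal to [c] is replaced by [t]; [a] is
   the correlation of that column with the current residual (see [Lobj_upd]). *)
Definition coord_obj (lam0 : R) (pen : R -> R) (a c t : R) : R :=
  (t - c) ^ 2 / 2 - (t - c) * a + lam0 * Rabs t + pen (Rabs t).

Definition resid_corr n p X (y b : nat -> R) j : R :=
  / INR n * sumR (fun i => X i j * (y i - Xmul X p b i)) n.

Lemma Lobj_upd n p X y lam0 pen b j t :
  (1 <= n)%nat -> (j < p)%nat -> sqnorm (fun i => X i j) n = INR n ->
  Lobj n p X y lam0 pen (upd b j t)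
  = Lobj n p X y lam0 pen b + coord_obj lam0 pen (resid_corr n p X y b j) (b j) t
    - coord_obj lam0 pen (resid_corr n p X y b j) (b j) (b j).
Proof.
  intros Hn Hj Hcol. unfold Lobj, coord_obj, resid_corr.
  rewrite (sumR_upd (fun _ v => Rabs v)), (sumR_upd (fun _ v => pen (Rabs v))) by auto.
  replace (sqnorm (fun i => y i - Xmul X p (upd b j t) i) n)
    with (sqnorm (fun i => (y i - Xmul X p b i) - (t - b j) * X i j) n)
    by (apply sumR_ext; intros; rewrite Xmul_upd by auto; ring).
  rewrite sqnorm_sub_scal, Hcol.
  rewrite (sumR_ext (fun i => (y i - Xmul X p b i) * X i j) (fun i => X i j * (y i - Xmul X p b i)))
    by (intros; ring).
  assert (0 < INR n) by (apply lt_0_INR; lia). field. lra.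
Qed.

Lemma resid_corr_upd_zero n p X y b j : (1 <= n)%nat -> (j < p)%nat ->
  sqnorm (fun i => X i j) n = INR n ->
  resid_corr n p X y (upd b j 0) j = b j + resid_corr n p X y b j.
Proof.
  intros Hn Hj Hcol. assert (0 < INR n) by (apply lt_0_INR; lia). unfold resid_corr.
  rewrite (sumR_ext _ (fun i => X i j * (y i - Xmul X p b i) + b j * X i j ^ 2))
    by (intros; rewrite Xmul_upd by auto; ring).
  rewrite sumR_plus, sumR_scal. fold (sqnorm (fun i => X i j) n). rewrite Hcol. field. lra.
Qed.

Lemma coord_obj_stationary lam0 pen pen' a sg u :
  (forall x, x > 0 -> derivable_pt_lim pen x (pen' x)) -> 0 < u -> sg * sg = 1 ->
  (forall t, coord_obj lam0 pen a (sg * u) (sg * u) <= coord_obj lam0 pen a (sg * u) t) ->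
  sg * a = lam0 + pen' u.
Proof.
  intros Hd Hu Hsg Hmin.
  set (xi := fun v => / 2 * ((v - u) * (v - u)) + - (sg * a) * (v - u) + lam0 * v + pen v).
  assert (Hxi : forall v, 0 < v -> xi v = coord_obj lam0 pen a (sg * u) (sg * v)).
  { intros v Hv. unfold xi, coord_obj.
    assert (Rabs (sg * v) = v) as ->.
    { rewrite Rabs_mult, (Rabs_right v) by lra.
      assert (Rabs sg * Rabs sg = 1) by (rewrite <- Rabs_mult, Hsg; apply Rabs_R1).
      pose proof (Rabs_pos sg). nra. }
    replace ((sg * v - sg * u) ^ 2) with (sg * sg * (v - u) ^ 2) by ring.
    rewrite Hsg. field. }
  assert (Hdx : derivable_pt_lim xi u (- (sg * a) + lam0 + pen' u)).
  { pose proof (derivable_pt_lim_minus _ _ _ _ _ (derivable_pt_lim_id u)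
                  (derivable_pt_lim_const u u)) as D1.
    pose proof (derivable_pt_lim_scal _ (/ 2) _ _ (derivable_pt_lim_mult _ _ _ _ _ D1 D1)) as D2.
    pose proof (derivable_pt_lim_scal _ (- (sg * a)) _ _ D1) as D3.
    pose proof (derivable_pt_lim_scal _ lam0 _ _ (derivable_pt_lim_id u)) as D4.
    pose proof (derivable_pt_lim_plus _ _ _ _ _ (derivable_pt_lim_plus _ _ _ _ _
                  (derivable_pt_lim_plus _ _ _ _ _ D2 D3) D4) (Hd u Hu)) as D.
    apply (derivable_pt_lim_ext _ xi) in D; [|intros; reflexivity].
    match type of D with derivable_pt_lim _ _ ?l =>
      replace (- (sg * a) + lam0 + pen' u) with l by (unfold minus_fct, id, fct_cte; ring) end.
    exact D. }
  assert (H0 : derive_pt xi u (exist _ _ Hdx) = 0).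
  { apply (deriv_minimum xi 0 (2 * u)); try lra.
    intros v Hv1 Hv2. rewrite !Hxi by lra. apply Hmin. }
  simpl in H0. lra.
Qed.

(* Decrease of the coordinatewise objective when a stationary coordinate of size [v] is set to
   zero (see [global_min_zero_small] below). *)
Definition zero_gain (pen pen' : R -> R) (v : R) : R := pen v - v * pen' v - v ^ 2 / 2.

Definition zero_on (K : nat -> bool) (m : nat) (b : nat -> R) : nat -> R :=
  fun k => if andb (Nat.ltb k m) (K k) then 0 else b k.

Definition thresholded (t : R) (p : nat) (b : nat -> R) : Prop :=
  forall j, (j < p)%nat -> b j <> 0 -> t <= Rabs (b j).

Definition small_coord (t : R) (x : R) : bool :=
  if Req_EM_T x 0 then false else if Rlt_dec (Rabs x) t then true else false.

Lemma small_coord_true t x : small_coord t x = true -> 0 < Rabs x < t.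
Proof.
  unfold small_coord. destruct (Req_EM_T x 0); [discriminate|].
  destruct (Rlt_dec (Rabs x) t); [|discriminate]. intros _. split; [apply Rabs_pos_lt|]; auto.
Qed.

Lemma small_coord_false t x : small_coord t x = false -> x = 0 \/ t <= Rabs x.
Proof.
  unfold small_coord. destruct (Req_EM_T x 0); auto.
  destruct (Rlt_dec (Rabs x) t); [discriminate|]. intros; right; lra.
Qed.

Lemma refit_residual_orthogonal n p X y bhat bt k : (1 <= n)%nat -> (k < p)%nat ->
  sqnorm (fun i => X i k) n = INR n -> bhat k <> 0 -> is_refit n p X y bhat bt ->
  sumR (fun i => (y i - Xmul X p bt i) * X i k) n = 0.
Proof.
  intros Hn Hk Hcol Hbk [Hsup Hmin]. assert (Hnpos : 0 < INR n) by (apply lt_0_INR; lia).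
  set (r := fun i => y i - Xmul X p bt i).
  set (D := sumR (fun i => r i * X i k) n).
  assert (Hs : supported_in p bhat (upd bt k (bt k + D / INR n))).
  { intros j Hj Hb. unfold upd. destruct (Nat.eq_dec j k) as [->|]; [contradiction|auto]. }
  specialize (Hmin _ Hs).
  replace (sqnorm (fun i => y i - Xmul X p (upd bt k (bt k + D / INR n)) i) n)
    with (sqnorm (fun i => r i - D / INR n * X i k) n) in Hmin
    by (apply sumR_ext; intros i _; unfold r; rewrite Xmul_upd by lia; ring).
  rewrite sqnorm_sub_scal, Hcol in Hmin. fold D r in Hmin.
  assert (D * D / INR n <= 0).
  { replace (D * D / INR n) with (2 * (D / INR n) * D - (D / INR n) ^ 2 * INR n)
      by (field; lra). lra. }
  assert (D * D <= 0).
  { apply Rmult_le_reg_r with (/ INR n); [apply Rinv_0_lt_compat; lra|]. unfold Rdiv in *. lra. }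
  destruct (Req_dec D 0) as [|HD]; [assumption|].
  pose proof (Rsqr_pos_lt D HD). unfold Rsqr in *. lra.
Qed.

Lemma refit_is_oracle n p s X y bhat bt : (1 <= n)%nat -> (s <= p)%nat ->
  (forall j, (j < p)%nat -> sqnorm (fun i => X i j) n = INR n) ->
  (forall j, (j < s)%nat -> bhat j <> 0) -> (forall j, (s <= j < p)%nat -> bhat j = 0) ->
  is_refit n p X y bhat bt -> is_oracle n p s X y bt.
Proof.
  intros Hn Hsp Hcol Hnz Hz Href.
  assert (Hbt0 : forall j, (s <= j < p)%nat -> bt j = 0)
    by (intros j Hj; apply (proj1 Href); [lia|apply Hz; auto]).
  split; [exact Hbt0|]. intros k Hk.
  pose proof (refit_residual_orthogonal n p X y bhat bt k Hn ltac:(lia) (Hcol k ltac:(lia))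
                (Hnz k Hk) Href) as HD.
  rewrite (sumR_ext _ (fun i => X i k * y i - sumR (fun j => X i k * X i j * bt j) s)) in HD.
  - rewrite sumR_minus, sumR_comm in HD.
    rewrite (sumR_ext _ (fun j => sumR (fun i => X i k * X i j * bt j) n)); [lra|].
    intros j _. rewrite Rmult_comm, <- sumR_scal. apply sumR_ext; intros; ring.
  - intros i _. rewrite (Xmul_zero_tail X p s bt i Hsp Hbt0).
    rewrite (sumR_ext (fun j => X i k * X i j * bt j) (fun j => X i k * (X i j * bt j)))
      by (intros; ring).
    rewrite sumR_scal. ring.
Qed.

Section Oracle.

Variables (n p s : nat) (X : nat -> nat -> R) (beta0 eps : nat -> R).
Variables (pen pen' pen'' : R -> R) (lam lam0 c1 kappa0 kappa pinf : R).

Hypothesis Hn : (1 <= n)%nat.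
Hypothesis Hlam0 : 0 < lam0.
Hypothesis Hc1 : 0 <= c1 < 1.
Hypothesis Hkappa0 : kappa0 > 0.
Hypothesis Hsp : (s <= p)%nat.
Hypothesis Hbeta0_tail : forall j, (s <= j < p)%nat -> beta0 j = 0.

Hypothesis Hcol : forall j, (j < p)%nat -> sqnorm (fun i => X i j) n = INR n.
Hypothesis Hsparse : forall d, (nnz d p < 2 * s)%nat -> sqnorm d p = 1 ->
  / sqrt (INR n) * sqrt (sqnorm (Xmul X p d) n) >= kappa0.
Hypothesis Hkappa : is_kappa n p s X kappa.
Hypothesis Hkappa_pos : kappa > 0.

Local Notation t0 := ((1 - c1) * lam).

Hypothesis Hpen0 : pen 0 = 0.
Hypothesis Hpen_mono : forall x y, 0 <= x -> x <= y -> pen x <= pen y.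
Hypothesis Hpen_concave : concave_nonneg pen.
Hypothesis Hpen_low : forall t, 0 <= t <= lam -> pen t >= / 2 * (lam ^ 2 - (Rmax (lam - t) 0) ^ 2).
Hypothesis Hpen'_t0 : pen' t0 <= c1 * lam.
Hypothesis Hpen'' : forall x, 0 < x < t0 -> derivable_pt_lim pen' x (pen'' x).
Hypothesis Hpen''_mono : forall x y, 0 < x -> x <= y -> y < t0 -> - pen'' y <= - pen'' x.
Hypothesis Hpen'_lam0 : pen' t0 <= lam0 / 4.
Hypothesis Hpen_lim : forall e, e > 0 -> exists T, forall t, t >= T -> Rabs (pen t - pinf) < e.
Hypothesis Hbeta_min : forall j, (j < s)%nat -> Rabs (beta0 j) > Rmax t0 (2 / kappa0 * sqrt pinf).
Hypothesis Hpen_diff : forall x, x > 0 -> derivable_pt_lim pen x (pen' x).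
Hypothesis Hpen'_cont : forall x, x > 0 -> continuity_pt pen' x.

Hypothesis Hlam : lam >= 56 / (1 - c1) / (kappa ^ 2) * lam0 * sqrt (INR s).

Local Notation noise j := (/ INR n * sumR (fun i => X i j * eps i) n).
Hypothesis Hnoise : forall j, (j < p)%nat -> Rabs (noise j) <= lam0 / 2.

Local Notation L := (lam0 * sqrt (INR s) / kappa ^ 2).

Lemma sparsity_pos : (1 <= s)%nat.
Proof. exact (is_kappa_sparsity_pos n p s X kappa Hkappa). Qed.

Lemma kappa_le_1 : kappa <= 1.
Proof.
  pose proof sparsity_pos.
  apply (kappa_lb_le_1 n p s X); auto; [apply Hcol; lia|apply Hkappa].
Qed.

Lemma L_pos : 0 < L.
Proof.
  pose proof sparsity_pos.
  assert (0 < sqrt (INR s)) by (apply sqrt_lt_R0, lt_0_INR; lia).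
  unfold Rdiv. apply Rmult_lt_0_compat; [nra|apply Rinv_0_lt_compat, pow_lt; lra].
Qed.

Lemma threshold_ge_L : 56 * L <= t0.
Proof.
  replace (56 * L) with ((1 - c1) * (56 / (1 - c1) / kappa ^ 2 * lam0 * sqrt (INR s)))
    by (field; split; lra).
  apply Rmult_le_compat_l; lra.
Qed.

Lemma threshold_pos : 0 < t0.
Proof. pose proof L_pos. pose proof threshold_ge_L. lra. Qed.

Lemma threshold_le_lam : t0 <= lam.
Proof. pose proof threshold_pos. assert (0 < lam) by nra. nra. Qed.

Lemma pen_ge_quadratic t : 0 <= t <= lam -> lam * t - t ^ 2 / 2 <= pen t.
Proof. intros Ht. specialize (Hpen_low t Ht). rewrite Rmax_left in Hpen_low by lra. lra. Qed.

Lemma pen_le_pinf t : 0 <= t -> pen t <= pinf.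
Proof.
  intros Ht. destruct (Rle_dec (pen t) pinf) as [|Hgt]; [assumption|exfalso].
  destruct (Hpen_lim (pen t - pinf)) as [T HT]; [lra|].
  specialize (HT (Rmax T t) (Rle_ge _ _ (Rmax_l _ _))).
  assert (pen t <= pen (Rmax T t)) by (apply Hpen_mono; [lra|apply Rmax_r]).
  rewrite Rabs_right in HT by lra. lra.
Qed.

Lemma pen_threshold_ge : t0 ^ 2 / 2 <= pen t0.
Proof.
  pose proof threshold_pos. pose proof threshold_le_lam.
  pose proof (pen_ge_quadratic t0 ltac:(lra)). nra.
Qed.

Lemma pen_increment_le a b : t0 <= a -> a <= b -> pen b - pen a <= lam0 / 4 * (b - a).
Proof.
  intros Ha Hb. pose proof threshold_pos.
  pose proof (concave_tangent pen (pen' a) a b Hpen_concave ltac:(lra) ltac:(lra)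
                (Hpen_diff a ltac:(lra))).
  pose proof (concave_deriv_antitone pen pen' t0 a Hpen_concave ltac:(lra) Ha
                (Hpen_diff t0 ltac:(lra)) (Hpen_diff a ltac:(lra))).
  nra.
Qed.

Lemma zero_gain_derivative w : 0 < w < t0 ->
  derivable_pt_lim (zero_gain pen pen') w (- w * (pen'' w + 1)).
Proof.
  intros Hw.
  pose proof (derivable_pt_lim_mult id pen' w 1 (pen'' w) (derivable_pt_lim_id w)
                (Hpen'' w Hw)) as Hm.
  pose proof (derivable_pt_lim_mult id id w 1 1 (derivable_pt_lim_id w)
                (derivable_pt_lim_id w)) as Hs.
  pose proof (derivable_pt_lim_minus _ _ _ _ _
                (derivable_pt_lim_minus _ _ _ _ _ (Hpen_diff w ltac:(lra)) Hm)
                (derivable_pt_lim_scal _ (/ 2) _ _ Hs)) as Hall.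
  apply (derivable_pt_lim_ext _ (zero_gain pen pen')) in Hall.
  - match type of Hall with derivable_pt_lim _ _ ?l =>
      replace (- w * (pen'' w + 1)) with l by (unfold id; field) end.
    exact Hall.
  - intros z. unfold zero_gain, minus_fct, mult_fct, mult_real_fct, id. field.
Qed.

Lemma zero_gain_ge_neg_sq a : 0 < a -> - a ^ 2 / 2 <= zero_gain pen pen' a.
Proof.
  intros Ha. unfold zero_gain.
  pose proof (concave_tangent pen (pen' a) a 0 Hpen_concave ltac:(lra) ltac:(lra)
                (Hpen_diff a Ha)). lra.
Qed.

Lemma zero_gain_threshold_nonneg : 0 <= zero_gain pen pen' t0.
Proof.
  pose proof threshold_pos. pose proof threshold_le_lam.
  pose proof (pen_ge_quadratic t0 ltac:(lra)).
  assert (t0 * pen' t0 <= t0 * (c1 * lam)) by (apply Rmult_le_compat_l; lra).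
  unfold zero_gain. nra.
Qed.

Lemma zero_gain_continuous : continuity_pt (zero_gain pen pen') t0.
Proof.
  pose proof threshold_pos.
  assert (Cpen : continuity_pt pen t0)
    by (apply derivable_continuous_pt; exists (pen' t0); apply Hpen_diff; lra).
  assert (Cmul : continuity_pt (fun v => v * pen' v) t0)
    by (apply (continuity_pt_mult id pen'); [apply derivable_continuous_pt, derivable_pt_id|
                                             apply Hpen'_cont; lra]).
  assert (Csq : continuity_pt (fun v => v ^ 2 / 2) t0)
    by (apply derivable_continuous_pt; reg).
  exact (continuity_pt_minus _ _ _ (continuity_pt_minus _ _ _ Cpen Cmul) Csq).
Qed.

(* The gain is monotone on each side of [u] according to the sign of [1 + pen'' u], since
   [- pen''] is decreasing. *)
Lemma zero_gain_nonneg u : 0 < u < t0 -> 0 <= zero_gain pen pen' u.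
Proof.
  intros Hu. set (psi := zero_gain pen pen').
  destruct (Rle_dec 1 (- pen'' u)) as [Hcase|Hcase].
  - assert (Hinc : forall a, 0 < a < u -> psi a <= psi u).
    { intros a Ha.
      destruct (MVT_cor2 psi (fun w => - w * (pen'' w + 1)) a u) as [c [Hmv Hc]]; [lra| |].
      + intros c Hc. apply zero_gain_derivative. lra.
      + assert (- pen'' u <= - pen'' c) by (apply Hpen''_mono; lra).
        assert (0 <= - c * (pen'' c + 1)) by nra. nra. }
    destruct (Rle_dec 0 (psi u)) as [|Hneg]; [assumption|exfalso].
    set (a := Rmin (u / 2) (Rmin 1 (- psi u))).
    assert (Ha1 : a <= u / 2) by apply Rmin_l.
    assert (Ha2 : a <= 1) by (eapply Rle_trans; [apply Rmin_r|apply Rmin_l]).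
    assert (Ha3 : a <= - psi u) by (eapply Rle_trans; [apply Rmin_r|apply Rmin_r]).
    assert (Ha0 : 0 < a) by (apply Rmin_glb_lt; [lra|apply Rmin_glb_lt; lra]).
    pose proof (Hinc a ltac:(lra)).
    pose proof (zero_gain_ge_neg_sq a Ha0) as Hlow. fold psi in Hlow.
    assert (a ^ 2 <= a) by nra. lra.
  - apply Rle_trans with (psi t0); [apply zero_gain_threshold_nonneg|].
    apply (continuity_pt_le_left psi t0 u); [apply zero_gain_continuous|lra|].
    intros w Hw.
    destruct (MVT_cor2 psi (fun w => - w * (pen'' w + 1)) u w) as [c [Hmv Hc]]; [lra| |].
    + intros c Hc. apply zero_gain_derivative. lra.
    + assert (- pen'' c <= - pen'' u) by (apply Hpen''_mono; lra).
      assert (- c * (pen'' c + 1) <= 0) by nra. nra.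
Qed.

Local Notation y := (fun i => Xmul X p beta0 i + eps i).
Local Notation corr := (resid_corr n p X y).
Local Notation obj := (coord_obj lam0 pen).
Local Notation global_min := (is_global_min n p X y lam0 pen).

Lemma global_min_coord b j : global_min b -> (j < p)%nat ->
  forall t, obj (corr b j) (b j) (b j) <= obj (corr b j) (b j) t.
Proof.
  intros Hg Hj t. specialize (Hg (upd b j t)). rewrite Lobj_upd in Hg by auto. lra.
Qed.

Lemma global_min_zero_small b j : global_min b -> (j < p)%nat -> 0 < Rabs (b j) < t0 ->
  global_min (upd b j 0).
Proof.
  intros Hg Hj Hu. set (u := Rabs (b j)) in *.
  assert (Hsg : exists sg, sg * sg = 1 /\ b j = sg * u).
  { unfold u. destruct (Rle_dec 0 (b j)).
    - exists 1. rewrite Rabs_right by lra. split; ring.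
    - exists (-1). rewrite Rabs_left by lra. split; ring. }
  destruct Hsg as [sg [Hsg Hbj]].
  assert (Hstat : sg * corr b j = lam0 + pen' u).
  { apply (coord_obj_stationary lam0 pen pen' _ sg u Hpen_diff); [lra|exact Hsg|].
    rewrite <- Hbj. apply global_min_coord; assumption. }
  pose proof (zero_gain_nonneg u Hu) as Hgain.
  intros c. apply Rle_trans with (Lobj n p X y lam0 pen b); [|apply Hg].
  rewrite Lobj_upd by auto. unfold coord_obj. fold u.
  rewrite Rabs_R0, Hpen0, Hbj. unfold zero_gain in Hgain.
  replace ((0 - sg * u) ^ 2) with (sg * sg * u ^ 2) by ring.
  replace ((0 - sg * u) * corr b j) with (- (u * (sg * corr b j))) by ring.
  rewrite Hsg, Hstat. replace (sg * u - sg * u) with 0 by ring. lra.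
Qed.

Lemma coord_obj_min_nonzero a c : c <> 0 -> (forall t, obj a c c <= obj a c t) ->
  lam + lam0 <= Rabs (c + a).
Proof.
  intros Hc Hm. specialize (Hm 0). unfold coord_obj in Hm. rewrite Rabs_R0, Hpen0 in Hm.
  pose proof threshold_pos. pose proof threshold_le_lam.
  set (u := Rabs c) in *. assert (Hu : 0 < u) by (apply Rabs_pos_lt; auto).
  assert (Hu2 : u ^ 2 = c ^ 2) by apply pow2_abs.
  assert (H1 : u ^ 2 / 2 + lam0 * u + pen u <= (c + a) * c).
  { replace ((c - c) ^ 2 / 2 - (c - c) * a) with 0 in Hm by field. nra. }
  assert (H2 : (c + a) * c <= Rabs (c + a) * u)
    by (unfold u; rewrite <- Rabs_mult; apply Rle_abs).
  assert (H3 : (lam + lam0) * u <= Rabs (c + a) * u).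
  { destruct (Rle_dec u lam).
    - pose proof (pen_ge_quadratic u ltac:(lra)). nra.
    - pose proof (pen_ge_quadratic lam ltac:(lra)).
      assert (pen lam <= pen u) by (apply Hpen_mono; lra). nra. }
  apply Rmult_le_reg_r with u; lra.
Qed.

Lemma global_min_zero_on b K : global_min b ->
  (forall k, K k = true -> (k < p)%nat /\ 0 < Rabs (b k) < t0) ->
  forall m, global_min (zero_on K m b).
Proof.
  intros Hg HK m. induction m as [|m IH].
  - replace (zero_on K 0 b) with b; [assumption|].
    apply functional_extensionality. intros k. reflexivity.
  - destruct (K m) eqn:Km.
    + replace (zero_on K (S m) b) with (upd (zero_on K m b) m 0).
      * destruct (HK m Km) as [Hm Hb]. apply global_min_zero_small; auto.
        unfold zero_on. rewrite Nat.ltb_irrefl. exact Hb.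
      * apply functional_extensionality. intros k. unfold zero_on, upd.
        destruct (Nat.eq_dec k m) as [->|Hkm].
        -- rewrite Km, (proj2 (Nat.ltb_lt m (S m))) by lia. reflexivity.
        -- destruct (Nat.ltb_spec k m), (Nat.ltb_spec k (S m)); simpl; auto; lia.
    + replace (zero_on K (S m) b) with (zero_on K m b); [assumption|].
      apply functional_extensionality. intros k. unfold zero_on.
      destruct (Nat.eq_dec k m) as [->|Hkm].
      * rewrite Km, !Bool.andb_false_r. reflexivity.
      * destruct (Nat.ltb_spec k m), (Nat.ltb_spec k (S m)); simpl; auto; lia.
Qed.

Local Notation pred_err b := (/ INR n * sqnorm (Xmul X p (fun j => b j - beta0 j)) n).
Local Notation l1_true b := (sumR (fun j => Rabs (b j - beta0 j)) s).
Local Notation l1_false b := (sumR (fun k => Rabs (b (s + k)%nat - beta0 (s + k)%nat)) (p - s)).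
Local Notation false_neg b := (sumR (fun j => 1 - nz_ind (b j)) s).
Local Notation false_pos b := (sumR (fun k => nz_ind (b (s + k)%nat)) (p - s)).
Local Notation excess b j :=
  ((b j%nat - beta0 j%nat) * noise j%nat + lam0 * (Rabs (beta0 j%nat) - Rabs (b j%nat))
   + (pen (Rabs (beta0 j%nat)) - pen (Rabs (b j%nat)))).

Lemma pred_err_nonneg b : 0 <= pred_err b.
Proof.
  assert (0 < INR n) by (apply lt_0_INR; lia).
  apply Rmult_le_pos; [left; apply Rinv_0_lt_compat; lra|apply sqnorm_nonneg].
Qed.

Lemma excess_risk_le b : global_min b -> pred_err b / 2 <= sumR (fun j => excess b j) p.
Proof.
  intros Hg. pose proof (Hg beta0) as HL. unfold Lobj in HL.
  assert (Hnpos : 0 < INR n) by (apply lt_0_INR; lia).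
  set (d := fun j => b j - beta0 j).
  replace (sqnorm (fun i => Xmul X p beta0 i + eps i - Xmul X p b i) n)
    with (sqnorm (fun i => eps i - 1 * Xmul X p d i) n) in HL
    by (apply sumR_ext; intros; unfold d; rewrite Xmul_minus; ring).
  replace (sqnorm (fun i => Xmul X p beta0 i + eps i - Xmul X p beta0 i) n)
    with (sqnorm eps n) in HL by (apply sumR_ext; intros; ring).
  rewrite sqnorm_sub_scal, sumR_Xmul_inner in HL.
  rewrite !sumR_plus, !sumR_minus, !sumR_scal, sumR_minus.
  rewrite (sumR_ext (fun j => (b j - beta0 j) * noise j)
             (fun j => / INR n * (d j * sumR (fun i => X i j * eps i) n)))
    by (intros; unfold d; ring).
  rewrite sumR_scal.
  replace (/ (2 * INR n)) with (/ INR n / 2) in HL by (field; lra). fold d. lra.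
Qed.

Lemma noise_term_le b j : (j < p)%nat ->
  (b j - beta0 j) * noise j <= lam0 / 2 * Rabs (b j - beta0 j).
Proof.
  intros Hj. specialize (Hnoise j Hj).
  pose proof (Rle_abs ((b j - beta0 j) * noise j)). rewrite Rabs_mult in H.
  pose proof (Rabs_pos (b j - beta0 j)). nra.
Qed.

Lemma excess_true_coord b j : thresholded t0 p b -> (j < s)%nat ->
  excess b j <= 7 / 4 * lam0 * Rabs (b j - beta0 j) + pen t0 * (1 - nz_ind (b j)).
Proof.
  intros Hthr Hj. pose proof (noise_term_le b j ltac:(lia)).
  pose proof threshold_pos. unfold thresholded in Hthr.
  assert (Hb0 : t0 < Rabs (beta0 j))
    by (pose proof (Hbeta_min j Hj); pose proof (Rmax_l t0 (2 / kappa0 * sqrt pinf)); lra).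
  assert (Htri : Rabs (beta0 j) - Rabs (b j) <= Rabs (b j - beta0 j)).
  { rewrite Rabs_minus_sym. pose proof (Rabs_triang_inv (beta0 j) (b j)). lra. }
  assert (lam0 * (Rabs (beta0 j) - Rabs (b j)) <= lam0 * Rabs (b j - beta0 j))
    by (apply Rmult_le_compat_l; lra).
  assert (Hpen : pen (Rabs (beta0 j)) - pen (Rabs (b j))
                 <= lam0 / 4 * Rabs (b j - beta0 j) + pen t0 * (1 - nz_ind (b j))).
  { destruct (nz_ind_cases (b j)) as [[-> Hbj]|[-> Hbj]].
    - rewrite Hbj, Rabs_R0, Hpen0, Rminus_0_l, Rabs_Ropp.
      pose proof (pen_increment_le t0 (Rabs (beta0 j)) ltac:(lra) ltac:(lra)).
      assert (0 <= lam0 / 4 * t0) by (apply Rmult_le_pos; lra). lra.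
    - pose proof (Hthr j ltac:(lia) Hbj). pose proof (Rabs_pos (b j - beta0 j)).
      destruct (Rle_dec (Rabs (beta0 j)) (Rabs (b j))).
      + assert (pen (Rabs (beta0 j)) <= pen (Rabs (b j)))
          by (apply Hpen_mono; [apply Rabs_pos|auto]).
        assert (0 <= lam0 / 4 * Rabs (b j - beta0 j)) by (apply Rmult_le_pos; lra). lra.
      + pose proof (pen_increment_le (Rabs (b j)) (Rabs (beta0 j)) ltac:(lra) ltac:(lra)).
        assert (lam0 / 4 * (Rabs (beta0 j) - Rabs (b j)) <= lam0 / 4 * Rabs (b j - beta0 j))
          by (apply Rmult_le_compat_l; lra). lra. }
  lra.
Qed.

Lemma excess_false_coord b j : thresholded t0 p b -> (s <= j < p)%nat ->
  excess b j <= - (lam0 / 2 * Rabs (b j - beta0 j) + pen t0 * nz_ind (b j)).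
Proof.
  intros Hthr Hj. pose proof (noise_term_le b j ltac:(lia)). unfold thresholded in Hthr.
  rewrite (Hbeta0_tail j Hj), Rabs_R0, Hpen0, Rminus_0_r in *.
  destruct (nz_ind_cases (b j)) as [[-> Hbj]|[-> Hbj]].
  - rewrite Hbj, Rabs_R0, Hpen0 in *. lra.
  - pose proof (Hthr j ltac:(lia) Hbj).
    assert (pen t0 <= pen (Rabs (b j))) by (apply Hpen_mono; pose proof threshold_pos; lra).
    lra.
Qed.

Lemma basic_inequality b : global_min b -> thresholded t0 p b ->
  pred_err b / 2 + lam0 / 2 * l1_false b + pen t0 * false_pos b
  <= 7 / 4 * lam0 * l1_true b + pen t0 * false_neg b.
Proof.
  intros Hg Hthr. pose proof (excess_risk_le b Hg) as Hex.
  rewrite (sumR_split _ s p Hsp) in Hex.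
  assert (Htrue : sumR (fun j => excess b j) s <= 7 / 4 * lam0 * l1_true b + pen t0 * false_neg b).
  { rewrite <- !sumR_scal, <- sumR_plus. apply sumR_le. intros j Hj.
    apply excess_true_coord; auto. }
  assert (Hfalse : sumR (fun k => excess b (s + k)%nat) (p - s)
                   <= - (lam0 / 2 * l1_false b + pen t0 * false_pos b)).
  { apply Rle_trans with (sumR (fun k => - (lam0 / 2 * Rabs (b (s + k)%nat - beta0 (s + k)%nat)
                                         + pen t0 * nz_ind (b (s + k)%nat))) (p - s)).
    - apply sumR_le. intros k Hk. apply excess_false_coord; auto; lia.
    - rewrite (sumR_ext _ (fun k => (-1) * (lam0 / 2 * Rabs (b (s + k)%nat - beta0 (s + k)%nat)
                                         + pen t0 * nz_ind (b (s + k)%nat)))) by (intros; ring).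
      rewrite sumR_scal, sumR_plus, !sumR_scal. lra. }
  lra.
Qed.

Lemma lam0_sqrt_s_le_L : lam0 * sqrt (INR s) <= L.
Proof.
  pose proof kappa_le_1.
  assert (Hk2 : 0 < kappa ^ 2 <= 1) by (split; [apply pow_lt; lra|nra]).
  assert (0 <= lam0 * sqrt (INR s)) by (apply Rmult_le_pos; [lra|apply sqrt_pos]).
  unfold Rdiv. rewrite <- (Rmult_1_r (lam0 * sqrt (INR s))) at 1.
  apply Rmult_le_compat_l; [assumption|].
  rewrite <- Rinv_1. apply Rinv_le_contravar; lra.
Qed.

Lemma false_pos_nonneg b : 0 <= false_pos b.
Proof. apply sumR_nonneg. intros; apply nz_ind_bounds. Qed.

Lemma false_neg_nonneg b : 0 <= false_neg b.
Proof. apply sumR_nonneg. intros k _. pose proof (nz_ind_bounds (b k)). lra. Qed.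

Lemma false_neg_le_s b : false_neg b <= INR s.
Proof.
  rewrite <- (Rmult_1_r (INR s)), <- sumR_const. apply sumR_le. intros k _.
  pose proof (nz_ind_bounds (b k)). lra.
Qed.

Lemma false_pos_ge_1 b j : (s <= j < p)%nat -> b j <> 0 -> 1 <= false_pos b.
Proof.
  intros Hj Hbj.
  replace 1 with (nz_ind (b (s + (j - s))%nat)).
  - apply (sumR_term_le (fun k => nz_ind (b (s + k)%nat))); [intros; apply nz_ind_bounds|lia].
  - replace (s + (j - s))%nat with j by lia.
    destruct (nz_ind_cases (b j)) as [[_ E]|[E _]]; [contradiction|exact E].
Qed.

Lemma false_neg_eq_0 b : (forall j, (j < s)%nat -> b j <> 0) -> false_neg b = 0.
Proof.
  intros Hnz. apply sumR_eq0. intros j Hj.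
  destruct (nz_ind_cases (b j)) as [[_ E]|[-> _]]; [exfalso; exact (Hnz j Hj E)|ring].
Qed.

Lemma true_support_of_small_l2 b : sqrt (sqnorm (fun j => b j - beta0 j) s) < t0 ->
  forall j, (j < s)%nat -> b j <> 0.
Proof.
  intros HN j Hj Hb. pose proof (Rabs_le_sqrt_sqnorm (fun j => b j - beta0 j) s j Hj) as Hd.
  cbv beta in Hd. rewrite Hb, Rminus_0_l, Rabs_Ropp in Hd.
  pose proof (Hbeta_min j Hj). pose proof (Rmax_l t0 (2 / kappa0 * sqrt pinf)). lra.
Qed.

Lemma nnz_lt_of_false_pos_lt b : false_pos b < false_neg b ->
  (nnz (fun j => (b j - beta0 j)%R) p < 2 * s)%nat.
Proof.
  intros HFM. apply INR_lt. rewrite nnz_sum_ind, mult_INR, (sumR_split _ s p Hsp).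
  assert (sumR (fun j => nz_ind (b j - beta0 j)) s <= INR s).
  { rewrite <- (Rmult_1_r (INR s)), <- sumR_const. apply sumR_le. intros; apply nz_ind_bounds. }
  cbv beta.
  replace (sumR (fun k => nz_ind (b (s + k)%nat - beta0 (s + k)%nat)) (p - s)) with (false_pos b)
    by (apply sumR_ext; intros k Hk; rewrite (Hbeta0_tail (s + k)) by lia; f_equal; ring).
  pose proof (false_neg_le_s b). simpl (INR 2). lra.
Qed.

(* A missed true coordinate costs at least [beta_min^2 >= 4 pinf / kappa0^2] in squared error. *)
Lemma false_neg_le_pred_err b : (nnz (fun j => (b j - beta0 j)%R) p < 2 * s)%nat ->
  4 * pen t0 * false_neg b <= pred_err b.
Proof.
  intros Hnnz. pose proof threshold_pos.
  pose proof pen_threshold_ge as Hpt0. pose proof (pen_le_pinf t0 ltac:(lra)) as Hpinf.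
  assert (Hpi : 0 < pinf) by nra.
  pose proof (sparse_eigenvalue_bound n p s X kappa0 (fun j => b j - beta0 j) Hn Hsparse Hnnz
                ltac:(lra)) as Hsp2.
  assert (Hsplit : sqnorm (fun j => b j - beta0 j) s <= sqnorm (fun j => b j - beta0 j) p).
  { unfold sqnorm. rewrite (sumR_split _ s p Hsp).
    pose proof (sumR_nonneg (fun k => (b (s + k)%nat - beta0 (s + k)%nat) ^ 2) (p - s)
                  ltac:(intros; apply pow2_ge_0)). lra. }
  assert (Hmiss : 4 * pinf / kappa0 ^ 2 * false_neg b <= sqnorm (fun j => b j - beta0 j) s).
  { rewrite <- sumR_scal. apply sumR_le. intros j Hj.
    destruct (nz_ind_cases (b j)) as [[-> Hb]|[-> _]];
      [|rewrite Rminus_diag, Rmult_0_r; apply pow2_ge_0].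
    rewrite Hb. replace ((0 - beta0 j) ^ 2) with (Rabs (beta0 j) ^ 2) by (rewrite pow2_abs; ring).
    pose proof (Hbeta_min j Hj) as Hbm.
    pose proof (Rmax_r t0 (2 / kappa0 * sqrt pinf)).
    assert (H2k : 0 <= 2 / kappa0 * sqrt pinf)
      by (apply Rmult_le_pos; [apply Rlt_le, Rdiv_lt_0_compat|apply sqrt_pos]; lra).
    replace (4 * pinf / kappa0 ^ 2 * (1 - 0)) with ((2 / kappa0 * sqrt pinf) ^ 2).
    - apply pow_incr. lra.
    - replace ((2 / kappa0 * sqrt pinf) ^ 2) with (4 * (sqrt pinf * sqrt pinf) / kappa0 ^ 2)
        by (field; lra).
      rewrite sqrt_sqrt by lra. ring. }
  assert (Hk2 : 0 < kappa0 ^ 2) by (apply pow_lt; lra).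
  assert (4 * pinf * false_neg b <= kappa0 ^ 2 * sqnorm (fun j => b j - beta0 j) s).
  { replace (4 * pinf * false_neg b) with (kappa0 ^ 2 * (4 * pinf / kappa0 ^ 2 * false_neg b))
      by (field; lra).
    apply Rmult_le_compat_l; lra. }
  pose proof (false_neg_nonneg b).
  assert (pen t0 * false_neg b <= pinf * false_neg b) by (apply Rmult_le_compat_r; lra).
  nra.
Qed.

Lemma false_neg_le_false_pos b : global_min b -> thresholded t0 p b ->
  false_neg b <= false_pos b.
Proof.
  intros Hg Hthr. destruct (Rle_dec (false_neg b) (false_pos b)) as [|HFM]; [assumption|exfalso].
  pose proof (false_neg_le_pred_err b (nnz_lt_of_false_pos_lt b ltac:(lra))).
  pose proof (basic_inequality b Hg Hthr).
  pose proof pen_threshold_ge. pose proof threshold_pos. pose proof (false_pos_nonneg b).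
  assert (0 <= pen t0 * false_pos b) by (apply Rmult_le_pos; nra).
  destruct (restricted_eigenvalue_bounds n p s X kappa (fun j => b j - beta0 j) (1 / 4) lam0
              Hn Hlam0 ltac:(lra) Hsp Hkappa_pos (proj1 Hkappa) ltac:(lra)) as [_ HN].
  replace (7 / 4 * lam0 * sqrt (INR s) / (1 / 4 * kappa ^ 2)) with (7 * L) in HN
    by (field; lra).
  pose proof L_pos. pose proof threshold_ge_L.
  rewrite (false_neg_eq_0 b (true_support_of_small_l2 b ltac:(lra))) in HFM. lra.
Qed.

Lemma thresholded_global_min_support b : global_min b -> thresholded t0 p b ->
  (forall j, (j < s)%nat -> b j <> 0) /\ (forall j, (s <= j < p)%nat -> b j = 0) /\
  sqrt (pred_err b) <= 7 / 2 * lam0 * sqrt (INR s) / kappa.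
Proof.
  intros Hg Hthr. pose proof (false_neg_le_false_pos b Hg Hthr) as HFM.
  pose proof (basic_inequality b Hg Hthr) as HBI.
  pose proof pen_threshold_ge. pose proof threshold_pos. pose proof L_pos.
  pose proof threshold_ge_L.
  assert (pen t0 * false_neg b <= pen t0 * false_pos b)
    by (apply Rmult_le_compat_l; [assert (0 <= t0 ^ 2) by apply pow2_ge_0; lra|exact HFM]).
  destruct (restricted_eigenvalue_bounds n p s X kappa (fun j => b j - beta0 j) (1 / 2) lam0
              Hn Hlam0 ltac:(lra) Hsp Hkappa_pos (proj1 Hkappa) ltac:(lra)) as [HR HN].
  replace (7 / 4 * lam0 * sqrt (INR s) / (1 / 2 * kappa ^ 2)) with (7 / 2 * L) in HN
    by (field; lra).
  replace (7 / 4 * lam0 * sqrt (INR s) / (1 / 2 * kappa)) with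
    (7 / 2 * lam0 * sqrt (INR s) / kappa) in HR by (field; lra).
  assert (Htrue : forall j, (j < s)%nat -> b j <> 0)
    by (apply true_support_of_small_l2; lra).
  split; [exact Htrue|split; [|exact HR]].
  intros j Hj. destruct (Req_dec (b j) 0) as [|Hbj]; [assumption|exfalso].
  pose proof (false_pos_ge_1 b j Hj Hbj).
  rewrite (false_neg_eq_0 b Htrue) in HBI.
  pose proof (l1_le_sqrt_card_l2 (fun j => b j - beta0 j) s) as HCS.
  pose proof lam0_sqrt_s_le_L.
  assert (Hl1 : l1_true b <= sqrt (INR s) * (7 / 2 * L))
    by (eapply Rle_trans; [exact HCS|apply Rmult_le_compat_l; [apply sqrt_pos|lra]]).
  assert (lam0 * l1_true b <= lam0 * (sqrt (INR s) * (7 / 2 * L)))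
    by (apply Rmult_le_compat_l; lra).
  assert (lam0 * sqrt (INR s) * (7 / 2 * L) <= L * (7 / 2 * L))
    by (apply Rmult_le_compat_r; lra).
  assert (Hpt : 0 < pen t0) by (assert (0 < t0 ^ 2) by (apply pow_lt; lra); lra).
  assert (pen t0 * 1 <= pen t0 * false_pos b) by (apply Rmult_le_compat_l; lra).
  assert (0 <= lam0 / 2 * l1_false b)
    by (apply Rmult_le_pos; [lra|apply sumR_nonneg; intros; apply Rabs_pos]).
  pose proof (pred_err_nonneg b).
  assert (t0 ^ 2 >= (56 * L) ^ 2) by (apply Rle_ge, pow_incr; lra). nra.
Qed.

Lemma resid_corr_lt b : sqrt (pred_err b) <= 7 / 2 * lam0 * sqrt (INR s) / kappa ->
  forall j, (j < p)%nat -> Rabs (corr b j) < lam + lam0.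
Proof.
  intros HR j Hj.
  assert (Hdecomp : corr b j = noise j
            - / INR n * sumR (fun i => X i j * Xmul X p (fun k => b k - beta0 k) i) n).
  { unfold resid_corr. rewrite <- Rmult_minus_distr_l, <- sumR_minus. f_equal.
    apply sumR_ext. intros. rewrite Xmul_minus. ring. }
  rewrite Hdecomp.
  set (A := / INR n * sumR (fun i => X i j * Xmul X p (fun k => b k - beta0 k) i) n).
  pose proof (column_correlation_le n X j (Xmul X p (fun k => b k - beta0 k)) Hn (Hcol j Hj))
    as HA. fold A in HA.
  pose proof (Hnoise j Hj). pose proof (Rabs_triang (noise j) (- A)).
  rewrite Rabs_Ropp in *. replace (noise j - A) with (noise j + - A) by ring.
  pose proof kappa_le_1. pose proof L_pos. pose proof threshold_ge_L. pose proof threshold_le_lam.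
  assert (7 / 2 * lam0 * sqrt (INR s) / kappa <= 7 / 2 * L).
  { replace (7 / 2 * lam0 * sqrt (INR s) / kappa) with (7 / 2 * kappa * L) by (field; lra). nra. }
  lra.
Qed.

(* Setting all small coordinates of [b] to zero yields a thresholded minimiser [bs]; if [b j] were
   small, reinstating it alone in [bs] would give a minimiser violating
   [coord_obj_min_nonzero], because [bs] has a small residual correlation. *)
Lemma global_min_thresholded b : global_min b -> thresholded t0 p b.
Proof.
  intros Hg j Hj Hbj. destruct (Rle_dec t0 (Rabs (b j))) as [|Hsmall]; [assumption|exfalso].
  set (K := fun k => andb (Nat.ltb k p) (small_coord t0 (b k))).
  assert (HK : forall k, K k = true -> (k < p)%nat /\ 0 < Rabs (b k) < t0).
  { intros k Hk. apply andb_prop in Hk. destruct Hk as [Hkp Hks].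
    split; [apply Nat.ltb_lt, Hkp|apply small_coord_true, Hks]. }
  set (bs := zero_on K p b).
  assert (Hbs : global_min bs) by (apply global_min_zero_on; auto).
  assert (Hthr : thresholded t0 p bs).
  { intros k Hk Hnz. unfold bs, zero_on in *.
    destruct (andb (Nat.ltb k p) (K k)) eqn:E; [contradiction|].
    unfold K in E. rewrite (proj2 (Nat.ltb_lt k p) Hk) in E. simpl in E.
    destruct (small_coord_false _ _ E); [contradiction|assumption]. }
  destruct (thresholded_global_min_support bs Hbs Hthr) as (_ & _ & HR).
  set (K' := fun k => andb (K k) (negb (Nat.eqb k j))).
  set (b' := zero_on K' p b).
  assert (Hb' : global_min b').
  { apply global_min_zero_on; auto. intros k Hk. apply HK. unfold K' in Hk.
    apply andb_prop in Hk. tauto. }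
  assert (Hb'j : b' j = b j).
  { unfold b', zero_on, K'. rewrite Nat.eqb_refl, !Bool.andb_false_r. reflexivity. }
  assert (Hbs_upd : bs = upd b' j 0).
  { apply functional_extensionality. intros k. unfold bs, b', zero_on, upd, K'.
    destruct (Nat.eq_dec k j) as [->|Hkj].
    - unfold K. rewrite (proj2 (Nat.ltb_lt j p) Hj). simpl.
      unfold small_coord. destruct (Req_EM_T (b j) 0); [contradiction|].
      destruct (Rlt_dec (Rabs (b j)) t0); [reflexivity|lra].
    - rewrite (proj2 (Nat.eqb_neq k j) Hkj), Bool.andb_true_r. reflexivity. }
  assert (Hb'nz : b' j <> 0) by (rewrite Hb'j; exact Hbj).
  pose proof (coord_obj_min_nonzero _ _ Hb'nz (global_min_coord b' j Hb' Hj)) as Hlarge.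
  rewrite <- resid_corr_upd_zero, <- Hbs_upd in Hlarge by auto.
  pose proof (resid_corr_lt bs HR j Hj). lra.
Qed.

Theorem global_min_refit_is_oracle bhat bt : global_min bhat -> is_refit n p X y bhat bt ->
  is_oracle n p s X y bt.
Proof.
  intros Hg Href.
  destruct (thresholded_global_min_support bhat Hg (global_min_thresholded bhat Hg))
    as (Htrue & Hfalse & _).
  exact (refit_is_oracle n p s X y bhat bt Hn Hsp Hcol Htrue Hfalse Href).
Qed.

End Oracle.

Lemma lambda0_pos c n p : c > 0 -> (2 <= n)%nat -> 0 < lambda0 c n p.
Proof.
  intros Hc Hn. unfold lambda0, pbar. apply Rmult_lt_0_compat; [lra|]. apply sqrt_lt_R0.
  assert (H2 : 2 <= INR n) by (replace 2 with (INR 2) by (simpl; ring); apply le_INR; lia).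
  assert (INR n <= INR (Nat.max n p)) by (apply le_INR; lia).
  apply Rdiv_lt_0_compat; [|lra]. rewrite <- ln_1. apply ln_increasing; lra.
Qed.

Lemma prob_compl {Omega : Type} (P : (Omega -> Prop) -> R) (A : Omega -> Prop) :
  is_prob P -> P (fun w => ~ A w) = 1 - P A.
Proof.
  intros (_ & H1 & Hext & Hadd).
  assert (P (fun w => A w \/ ~ A w) = P A + P (fun w => ~ A w)) by (apply Hadd; tauto).
  assert (P (fun w => A w \/ ~ A w) = P (fun _ => True))
    by (apply Hext; intros w; split; [auto|intros _; apply classic]).
  lra.
Qed.

Lemma prob_mono {Omega : Type} (P : (Omega -> Prop) -> R) (A B : Omega -> Prop) :
  is_prob P -> (forall w, A w -> B w) -> P A <= P B.
Proof.
  intros (Hnn & _ & Hext & Hadd) HAB.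
  assert (E1 : P (fun w => A w \/ (B w /\ ~ A w)) = P A + P (fun w => B w /\ ~ A w))
    by (apply Hadd; tauto).
  assert (E2 : P (fun w => A w \/ (B w /\ ~ A w)) = P B).
  { apply Hext; intros w; split; [intros [Ha|[Hb _]]; auto|].
    intros Hb. destruct (classic (A w)); auto. }
  specialize (Hnn (fun w => B w /\ ~ A w)). lra.
Qed.

Theorem corollary1
  (Omega : Type) (P : (Omega -> Prop) -> R)
  (p s : nat -> nat) (X : nat -> nat -> nat -> R) (beta0 : nat -> nat -> R)
  (eps : nat -> Omega -> nat -> R)
  (lam : nat -> R) (pen pen' pen'' : nat -> R -> R) (pinf : nat -> R)
  (c c0 c1 kappa0 : R) (kappa : nat -> R)
  (HP : is_prob P)
  (Hc : c > 0) (Hc0 : c0 > 0) (Hc1 : 0 <= c1 < 1) (Hk0 : kappa0 > 0)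
  (Hsupp : forall n, (s n <= p n)%nat /\
             (forall j, (j < s n)%nat -> beta0 n j <> 0) /\
             (forall j, (s n <= j < p n)%nat -> beta0 n j = 0))
  (HC1 : forall n, (1 <= n)%nat -> Condition1 n (p n) (s n) (X n) kappa0 (kappa n))
  (HC2 : forall n, (1 <= n)%nat ->
           Condition2 (p n) (s n) (pen n) (pen' n) (pen'' n) (lam n)
             (lambda0 c n (p n)) c1 kappa0 (pinf n) (beta0 n))
  (HC1diff : forall n x, (1 <= n)%nat -> x > 0 ->
           derivable_pt_lim (pen n) x (pen' n x) /\ continuity_pt (pen' n) x)
  (Hlam : forall n, (1 <= n)%nat ->
           lam n >= 56 / (1 - c1) / (kappa n ^ 2) * lambda0 c n (p n) * sqrt (INR (s n)))
  (HD : exists C N, forall n, (N <= n)%nat -> (1 <= n)%nat ->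
           P (fun w => exists j, (j < p n)%nat /\
                Rabs (/ INR n * sumR (fun i => X n i j * eps n w i) n)
                  > lambda0 c n (p n) / 2)
           <= C * Rpower (INR (pbar n (p n))) (- c0)) :
  exists C N, forall n, (N <= n)%nat -> (1 <= n)%nat ->
    P (fun w =>
         let y := fun i => Xmul (X n) (p n) (beta0 n) i + eps n w i in
         forall bhat bt : nat -> R,
           is_global_min n (p n) (X n) y (lambda0 c n (p n)) (pen n) bhat ->
           is_refit n (p n) (X n) y bhat bt ->
           is_oracle n (p n) (s n) (X n) y bt)
    >= 1 - C * Rpower (INR (pbar n (p n))) (- c0).
Proof.
  destruct HD as [C [N HN]]. exists C, (Nat.max N 2). intros n Hn Hn1.
  specialize (HN n ltac:(lia) Hn1).
  set (bad := fun w => exists j, (j < p n)%nat /\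
                Rabs (/ INR n * sumR (fun i => X n i j * eps n w i) n) > lambda0 c n (p n) / 2).
  fold bad in HN.
  apply Rle_ge, Rle_trans with (P (fun w => ~ bad w)); [rewrite (prob_compl P bad HP); lra|].
  apply prob_mono; [exact HP|]. intros w Hw; cbv zeta; intros bhat bt Hg Href.
  destruct (Hsupp n) as (Hsp & _ & Hfalse).
  destruct (HC1 n Hn1) as (Hcol & Hsparse & Hkappa & Hkpos).
  destruct (HC2 n Hn1) as (Hp0 & _ & Hmono & Hconc & Hlow & Hd1 & Hd2 & Hdec & Hd3 & Hlim & Hmin).
  eapply (global_min_refit_is_oracle n (p n) (s n) (X n) (beta0 n) (eps n w) (pen n) (pen' n)
           (pen'' n) (lam n) (lambda0 c n (p n)) c1 kappa0 (kappa n) (pinf n)); eauto.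
  - apply lambda0_pos; auto; lia.
  - intros x Hx. apply HC1diff; auto.
  - intros x Hx. apply HC1diff; auto.
  - intros j Hj. apply Rnot_lt_le. intros Hgt. apply Hw. exists j. split; [exact Hj|lra].
Qed.
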